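(* Let $\mathscr X$ be a Banach space, $\mathscr Y$ a Hilbert space and $A:\mathscr X\to\mathscr Y$ a bounded linear operator with adjoint $A^*:\mathscr Y\to\mathscr X^*$. Let $\mathcal R:\mathscr X\to[0,\infty]$ be proper, lower semi-continuous and $c_0$-strongly convex for some $c_0>0$. Assume the equation $Ax=y$ has a solution in $\mathrm{dom}(\mathcal R)$, and let $x^\dagger$ be its unique $\mathcal R$-minimizing solution. Let $y_1,y_2,\dots$ be independent identically distributed $\mathscr Y$-valued random variables on a probability space with $\mathbb E[y_1]=y$ and $0<\sigma^2:=\mathbb E[\|y_1-y\|^2]<\infty$, and set $\bar y^{(n)}=\frac1n\sum_{i=1}^n y_i$. For fixed $n\ge1$ and step size $\gamma>0$ define, with $\lambda_0^{(n)}=0$, $$x_t^{(n)}=\arg\min_{x\in\mathscr X}\{\mathcal R(x)-\langle\lambda_t^{(n)},Ax\rangle\},\qquad \lambda_{t+1}^{(n)}=\lambda_t^{(n)}-\gamma(Ax_t^{(n)}-\bar y^{(n)}),\quad t\ge0.$$ Let $L:=\|A\|^2/(2c_0)$ and assume $0<\gamma<1/L$. Then for all integers $t\ge0$, $$c\gamma(t+1)\|Ax_t^{(n)}-\bar y^{(n)}\|^2+\frac{1}{8\gamma(t+1)}\|\lambda_{t+1}^{(n)}\|^2\le \eta_t+\gamma(t+1)\|\bar y^{(n)}-y\|^2,$$ where $c:=\frac12-\frac{L\gamma}{2}>0$ and $$\eta_t:=\sup_{x\in\mathscr X}\Big\{\mathcal R(x^\dagger)-\mathcal R(x)-\tfr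ac13\gamma(t+1)\|Ax-y\|^2\Big\}.$$
   Context: A proper function $f:\mathscr X\to(-\infty,\infty]$ is $c_0$-strongly convex if $f(s\bar x+(1-s)x)+c_0s(1-s)\|\bar x-x\|^2\le sf(\bar x)+(1-s)f(x)$ for all $\bar x,x\in\mathrm{dom}(f)$, $s\in[0,1]$. An $\mathcal R$-minimizing solution $x^\dagger$ of $Ax=y$ satisfies $Ax^\dagger=y$ and $\mathcal R(x^\dagger)=\min\{\mathcal R(x):Ax=y\}$. The minimizer defining $x_t^{(n)}$ exists and is unique by strong convexity; $\langle\cdot,\cdot\rangle$ denotes the inner product of $\mathscr Y$. *)

From HB Require Import structures.
From mathcomp Require Import all_boot all_order all_algebra.
From mathcomp Require Import all_classical all_reals all_analysis.
Set Implicit Arguments. Unset Strict Implicit. Unset Printing Implicit Defensive.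
Import Order.TTheory GRing.Theory Num.Theory.
Import numFieldNormedType.Exports.
Local Open Scope classical_set_scope.
Local Open Scope ring_scope.

(* A real inner product on Y inducing the norm of Y: together with
   completeness of Y this makes Y a (real) Hilbert space. *)
Definition is_inner_product {R : realType} {Y : normedModType R}
  (ip : Y -> Y -> R) : Prop :=
  [/\ (forall u v, ip u v = ip v u),
      (forall a u v w, ip (a *: u + v) w = a * ip u w + ip v w),
      (forall u, 0 <= ip u u) &
      (forall u, `|u| ^+ 2 = ip u u)].

Definition opnorm {R : realType} {X Y : normedModType R} (A : X -> Y) : R :=
  sup [set `|A x| | x in [set x : X | `|x| <= 1]].

(* proper: somewhere finite (values in [0, +oo] are imposed separately) *)
Definition proper_fun {R : realType} {X : Type} (f : X -> \bar R) : Prop :=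
  exists x, (f x < +oo)%E.

Definition strongly_convex {R : realType} {X : normedModType R}
  (c0 : R) (f : X -> \bar R) : Prop :=
  forall (xb x : X) (s : R), (f xb < +oo)%E -> (f x < +oo)%E ->
    0 <= s <= 1 ->
    (f (s *: xb + (1 - s) *: x)%R + (c0 * s * (1 - s) * `|xb - x| ^+ 2)%:E
      <= s%:E * f xb + (1 - s)%:E * f x)%E.

Definition R_minimizing_solution {R : realType} {X Y : normedModType R}
  (A : X -> Y) (f : X -> \bar R) (y : Y) (xd : X) : Prop :=
  A xd = y /\ forall x, A x = y -> (f xd <= f x)%E.

Definition eta_t {R : realType} {X Y : normedModType R}
  (A : X -> Y) (f : X -> \bar R) (y : Y) (xd : X) (gamma : R) (t : nat)
  : \bar R :=
  ereal_sup [set (f xd - f z - (gamma * t.+1%:R / 3 * `|A z - y| ^+ 2)%:E)%E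
            | z in [set: X]].

(* The iteration is gradient ascent with step gamma on the dual function
   d(mu) = min_z R(z) - <mu, A z - ybar>, whose gradient at lam k is
   -(A (x k) - ybar).  Strong convexity of R keeps consecutive iterates close,
   which yields both that the residual |A (x k) - ybar| is nonincreasing and the
   ascent inequality for d with constant L.  Telescoping |mu - lam k|^2 bounds
   (t+1) d(lam (t+1)) minus the sum of the Lagrangian values at x 0, ..., x t,
   for every multiplier mu; by convexity that sum dominates (t+1) times the
   Lagrangian at the mean xbar of x 0, ..., x t.  For
   mu = -(2 gamma (t+1) / 3) (A xbar - y) what remains is a sum of squares,
   and xbar is the point at which the supremum eta_t is tested. *)

From HB Require Import structures.
From mathcomp Require Import all_boot all_order all_algebra.
From mathcomp Require Import all_classical all_reals all_analysis.
From mathcomp Require Import lra ring.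
Import Order.TTheory GRing.Theory Num.Theory.
Import numFieldNormedType.Exports.
Local Open Scope classical_set_scope.
Local Open Scope ring_scope.

Set Implicit Arguments.
Unset Strict Implicit.
Unset Printing Implicit Defensive.

Lemma ler_of_forall_mul1B (R : realFieldType) (a b : R) : 0 <= b ->
  (forall s, 0 < s < 1 -> a * (1 - s) <= b) -> a <= b.
Proof.
move=> b0 H; rewrite leNgt; apply/negP => ba.
have a0 : 0 < a by lra.
set s := (a - b) / (2 * a).
have s0 : 0 < s by apply: divr_gt0; lra.
have s1 : s < 1 by rewrite ltr_pdivrMr; lra.
have : a * (1 - s) = (a + b) / 2 by rewrite /s; field; lra.
have := H s; rewrite s0 s1 => /(_ isT); lra.
Qed.

Section Convexity.
Variables (R : realFieldType) (X : normedModType R).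

Definition convex_on (D : set X) (f : X -> R) :=
  forall a b s, D a -> D b -> 0 <= s <= 1 ->
    D (s *: a + (1 - s) *: b) /\
    f (s *: a + (1 - s) *: b) <= s * f a + (1 - s) * f b.

Definition strongly_convex_on (D : set X) (c : R) (f : X -> R) :=
  forall a b s, D a -> D b -> 0 <= s <= 1 ->
    D (s *: a + (1 - s) *: b) /\
    f (s *: a + (1 - s) *: b) + c * s * (1 - s) * `|a - b| ^+ 2
      <= s * f a + (1 - s) * f b.

Definition affine (h : X -> R) :=
  forall a b s, h (s *: a + (1 - s) *: b) = s * h a + (1 - s) * h b.

Definition avg (x : nat -> X) n := n.+1%:R^-1 *: \sum_(k < n.+1) x k.

Lemma strongly_convex_on_convex D c f :
  0 <= c -> strongly_convex_on D c f -> convex_on D f.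
Proof.
move=> c0 Hf a b s Da Db s01; have [Dw Hw] := Hf a b s Da Db s01.
split=> //; case/andP: s01 => s0 s1.
have : 0 <= c * s * (1 - s) * `|a - b| ^+ 2.
  by rewrite !mulr_ge0 ?sqr_ge0 ?subr_ge0.
lra.
Qed.

Lemma strongly_convex_onB D c f h :
  strongly_convex_on D c f -> affine h ->
  strongly_convex_on D c (fun z => f z - h z).
Proof.
move=> Hf Hh a b s Da Db s01; have [Dw Hw] := Hf a b s Da Db s01.
by split=> //; rewrite Hh; lra.
Qed.

Lemma strongly_convex_min_growth D c f x z :
  strongly_convex_on D c f -> D x -> (forall w, D w -> f x <= f w) -> D z ->
  f x + c * `|z - x| ^+ 2 <= f z.
Proof.
move=> Hf Dx xmin Dz.
suff : c * `|z - x| ^+ 2 <= f z - f x by lra.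
apply: ler_of_forall_mul1B; first by rewrite subr_ge0 xmin.
move=> s /andP[s0 s1].
have s01 : 0 <= s <= 1 by rewrite !ltW.
have [Dw Hw] := Hf z x s Dz Dx s01.
have fxw := xmin _ Dw.
rewrite -(ler_pM2r s0).
have -> : c * `|z - x| ^+ 2 * (1 - s) * s = c * s * (1 - s) * `|z - x| ^+ 2.
  by ring.
lra.
Qed.

Lemma convex_on_avg D f (x : nat -> X) n :
  convex_on D f -> (forall k, D (x k)) ->
  D (avg x n) /\ n.+1%:R * f (avg x n) <= \sum_(k < n.+1) f (x k).
Proof.
move=> Hf Dx; elim: n => [|n [Dm IH]].
  by rewrite /avg !big_ord1 invr1 scale1r mul1r.
have n2_gt0 : 0 < n.+2%:R :> R by rewrite ltr0n.
pose s : R := n.+2%:R^-1.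
have s01 : 0 <= s <= 1 by rewrite invr_ge0 ltW // invf_le1 // ler1n.
have ns : n.+2%:R * s = 1 by rewrite mulfV ?gt_eqF.
have n1s : n.+2%:R * (1 - s) = n.+1%:R by rewrite mulrBr ns mulr1 -natr1 addrK.
have avgS : avg x n.+1 = s *: x n.+1 + (1 - s) *: avg x n.
  rewrite /avg big_ord_recr /= scalerA scalerDr addrC; congr (_ + _ *: _).
  apply: (mulfI (lt0r_neq0 n2_gt0)); rewrite -/s ns mulrA n1s mulfV //.
have [Dw Hw] := Hf _ _ _ (Dx n.+1) Dm s01.
rewrite avgS; split=> //; rewrite big_ord_recr /=.
have := ler_wpM2l (ltW n2_gt0) Hw.
rewrite mulrDr !mulrA ns n1s mul1r; lra.
Qed.

End Convexity.

Lemma strongly_convex_fine (R : realType) (X : normedModType R) (c0 : R)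
  (f : X -> \bar R) : (forall x, 0 <= f x)%E -> strongly_convex c0 f ->
  strongly_convex_on [set x | (f x < +oo)%E] c0 (fun x => fine (f x)).
Proof.
move=> f_ge0 f_sc a b s fa fb s01.
have finE z : (f z < +oo)%E -> f z = (fine (f z))%:E.
  by move=> fz; rewrite fineK // ge0_fin_numE.
have := f_sc a b s fa fb s01; rewrite (finE a fa) (finE b fb) => h.
have fw : (f (s *: a + (1 - s) *: b)%R < +oo)%E.
  apply: le_lt_trans (ltry (s * fine (f a) + (1 - s) * fine (f b)
    - c0 * s * (1 - s) * `|a - b| ^+ 2)).
  by rewrite EFinB leeBrDr.
by split=> //; move: h; rewrite (finE _ fw) -EFinD -!EFinM -EFinD lee_fin.
Qed.

Section InnerProduct.
Variables (R : realType) (Y : normedModType R) (ip : Y -> Y -> R).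
Hypothesis Hip : is_inner_product ip.

Lemma ipC u v : ip u v = ip v u.
Proof. by case: Hip. Qed.

Lemma ipDl u v w : ip (u + v) w = ip u w + ip v w.
Proof. by case: Hip => _ H _ _; have := H 1 u v w; rewrite scale1r mul1r. Qed.

Lemma ip0l w : ip 0 w = 0.
Proof. by have := ipDl 0 0 w; rewrite addr0; lra. Qed.

Lemma ipZl a u w : ip (a *: u) w = a * ip u w.
Proof. by case: Hip => _ H _ _; have := H a u 0 w; rewrite !addr0 ip0l addr0. Qed.

Lemma ipNl u w : ip (- u) w = - ip u w.
Proof. by rewrite -scaleN1r ipZl mulN1r. Qed.

Lemma ipDr u v w : ip w (u + v) = ip w u + ip w v.
Proof. by rewrite ipC ipDl !(ipC w). Qed.

Lemma ipZr a u w : ip w (a *: u) = a * ip w u.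
Proof. by rewrite ipC ipZl ipC. Qed.

Lemma ipNr u w : ip w (- u) = - ip w u.
Proof. by rewrite ipC ipNl ipC. Qed.

Lemma ip0r w : ip w 0 = 0.
Proof. by rewrite ipC ip0l. Qed.

Definition ipE := (ipDl, ipDr, ipNl, ipNr, ipZl, ipZr, ip0l, ip0r).

Lemma ip_norm u : `|u| ^+ 2 = ip u u.
Proof. by case: Hip. Qed.

Lemma ip_ge0 u : 0 <= ip u u.
Proof. by rewrite -ip_norm sqr_ge0. Qed.

Lemma sqr_normD u v : `|u + v| ^+ 2 = `|u| ^+ 2 + 2 * ip u v + `|v| ^+ 2.
Proof. by rewrite !ip_norm !ipE (ipC v u); ring. Qed.

Lemma young_ip (g d : Y) (K c gamma D : R) :
  0 <= K -> 0 < c -> 0 <= D -> `|d| ^+ 2 <= K * D ->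
  - (K * gamma ^+ 2 * `|g| ^+ 2) <= 4 * c * (gamma * ip g d + c * D).
Proof.
rewrite le0r => /orP[/eqP-> | K_gt0] c_gt0 D_ge0 dD.
  have -> : d = 0.
    by apply/eqP; rewrite -normr_eq0 -sqrf_eq0 eq_le sqr_ge0 -(mul0r D) dD.
  by rewrite ip0r !mul0r oppr0 mulr0 add0r !mulr_ge0 // ltW.
have := ip_ge0 ((K * gamma) *: g + (2 * c) *: d).
have := ler_wpM2l (_ : 0 <= 4 * c ^+ 2) dD.
rewrite mulr_ge0 ?sqr_ge0 // => /(_ isT).
rewrite !ip_norm !ipE (ipC d g) => dD4 sq.
have : 0 <= K * (4 * c * (gamma * ip g d + c * D) + K * gamma ^+ 2 * ip g g).
  lra.
rewrite pmulr_rge0 //; lra.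
Qed.

Lemma completing_square_le (l u e mu : Y) (s : R) : mu = - (2 * s / 3) *: u ->
  2 * s * (ip l e + ip mu (u - e)) + `|mu| ^+ 2 - `|mu - l| ^+ 2 + `|l| ^+ 2 / 4
    <= 2 * s ^+ 2 * (`|e| ^+ 2 - `|u| ^+ 2 / 3).
Proof.
(* The gap is 2 |s e - (s / 3) u - l / 2|^2 + |(2 s / 3) u + l / 2|^2. *)
move=> ->; have := ip_ge0 (s *: e - (s / 3) *: u - 2^-1 *: l).
have := ip_ge0 ((2 * s / 3) *: u + 2^-1 *: l).
rewrite !ip_norm !ipE (ipC e u) (ipC l u) (ipC l e); lra.
Qed.

Section DualAscent.
Variables (X : normedModType R) (A : {linear X -> Y}) (K c0 gamma : R).
Hypotheses (K_ge0 : 0 <= K) (normA : forall u, `|A u| ^+ 2 <= K * `|u| ^+ 2)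
  (c0_gt0 : 0 < c0) (gamma_gt0 : 0 < gamma).
Local Notation L := (K / (2 * c0)).
Local Notation c := (2^-1 - L * gamma / 2).
Hypothesis gammaL : gamma * L < 1.
Variables (D : set X) (r : X -> R) (ybar : Y) (x : nat -> X) (lam : nat -> Y).
Hypotheses (r_sc : strongly_convex_on D c0 r) (x_in : forall k, D (x k)).
Hypothesis x_min : forall k z, D z ->
  r (x k) - ip (lam k) (A (x k)) <= r z - ip (lam k) (A z).
Hypothesis lamS : forall k, lam k.+1 = lam k - gamma *: (A (x k) - ybar).

Definition lagr mu z := r z - ip mu (A z - ybar).
(* By [lagr_min], [phi k] is the value of the dual function at [lam k]. *)
Definition phi k := lagr (lam k) (x k).

Lemma L_ge0 : 0 <= L.
Proof. by rewrite divr_ge0 // mulr_ge0 // ltW. Qed.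

Lemma c_ge0 : 0 <= c.
Proof. by have := gammaL; lra. Qed.

Lemma gammaK_lt_2c0 : gamma * K < 2 * c0.
Proof.
by move: gammaL; rewrite mulrA ltr_pdivrMr ?mul1r //; have := c0_gt0; lra.
Qed.

Lemma lagr_strongly_convex mu : strongly_convex_on D c0 (lagr mu).
Proof.
apply: (strongly_convex_onB (h := fun z => ip mu (A z - ybar))) => // a b s.
by rewrite linearD !linearZ /= !ipE; ring.
Qed.

Lemma lagr_min k z : D z -> phi k <= lagr (lam k) z.
Proof. by move=> Dz; have := x_min k Dz; rewrite /phi /lagr !ipE; lra. Qed.

Lemma lagr_growth k z : D z -> phi k + c0 * `|z - x k| ^+ 2 <= lagr (lam k) z.
Proof.
exact: strongly_convex_min_growth (lagr_strongly_convex _) (x_in k) (lagr_min k).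
Qed.

Lemma lagrS k z :
  lagr (lam k.+1) z = lagr (lam k) z + gamma * ip (A (x k) - ybar) (A z - ybar).
Proof. by rewrite /lagr lamS ipDl ipNl ipZl; ring. Qed.

Lemma iterates_dist_le k : 2 * c0 * `|x k.+1 - x k| ^+ 2
  <= - gamma * ip (A (x k) - ybar) (A (x k.+1) - A (x k)).
Proof.
have h1 := lagr_growth k (x_in k.+1).
have h2 := lagr_growth k.+1 (x_in k).
rewrite /phi !lagrS distrC in h2; rewrite /phi in h1.
have -> : A (x k.+1) - A (x k) = (A (x k.+1) - ybar) - (A (x k) - ybar).
  by rewrite opprB addrA subrK.
rewrite ipDr ipNr; lra.
Qed.

Lemma residual_nonincreasing k :
  `|A (x k.+1) - ybar| ^+ 2 <= `|A (x k) - ybar| ^+ 2.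
Proof.
have dist := iterates_dist_le k.
have nA := normA (x k.+1 - x k); rewrite linearB /= in nA.
have -> : A (x k.+1) - ybar = (A (x k) - ybar) + (A (x k.+1) - A (x k)).
  by rewrite [RHS]addrC addrA subrK.
rewrite sqr_normD.
have N_ge0 := sqr_ge0 `|x k.+1 - x k|.
move: (ip _ _) (`|x k.+1 - x k| ^+ 2) (`|A (x k.+1) - A (x k)| ^+ 2) dist nA N_ge0
  => a N d2 dist nA N_ge0.
have := gamma_gt0; have := c0_gt0; have := gammaK_lt_2c0; have := K_ge0.
nra.
Qed.

Lemma dual_ascent k :
  phi k + gamma * (1 - L * gamma / 2) * `|A (x k) - ybar| ^+ 2 <= phi k.+1.
Proof.
have growth := lagr_growth k (x_in k.+1).
have nA := normA (x k.+1 - x k); rewrite linearB /= in nA.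
have young := young_ip (A (x k) - ybar) gamma K_ge0 c0_gt0 (sqr_ge0 _) nA.
have {}young : - (L * gamma ^+ 2 / 2 * `|A (x k) - ybar| ^+ 2)
    <= gamma * ip (A (x k) - ybar) (A (x k.+1) - A (x k))
       + c0 * `|x k.+1 - x k| ^+ 2.
  rewrite -(ler_pM2l (_ : 0 < 4 * c0)) ?mulr_gt0 //.
  suff -> : 4 * c0 * - (L * gamma ^+ 2 / 2 * `|A (x k) - ybar| ^+ 2)
    = - (K * gamma ^+ 2 * `|A (x k) - ybar| ^+ 2) by [].
  by field; rewrite gt_eqF.
rewrite [phi k.+1]/phi lagrS.
have -> : A (x k.+1) - ybar = (A (x k) - ybar) + (A (x k.+1) - A (x k)).
  by rewrite [RHS]addrC addrA subrK.
rewrite ipDr -ip_norm; lra.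
Qed.

Lemma dual_dist_step mu k :
  `|mu - lam k.+1| ^+ 2 - `|mu - lam k| ^+ 2
    + 2 * c * gamma ^+ 2 * `|A (x k) - ybar| ^+ 2
    <= 2 * gamma * (phi k.+1 - lagr mu (x k)).
Proof.
have asc := ler_wpM2l (mulr_ge0 (ler0n _ 2) (ltW gamma_gt0)) (dual_ascent k).
have -> : mu - lam k.+1 = (mu - lam k) + gamma *: (A (x k) - ybar).
  by rewrite lamS opprD opprK addrA.
have e : ip (mu - lam k) (A (x k) - ybar) = phi k - lagr mu (x k).
  by rewrite /phi /lagr ipDl ipNl; ring.
rewrite sqr_normD ipZr e normrZ ger0_norm ?(ltW gamma_gt0) // exprMn.
lra.
Qed.

Lemma dual_dist_sum mu t :
  `|mu - lam t.+1| ^+ 2 - `|mu - lam 0| ^+ 2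
    + 2 * c * gamma ^+ 2 * t.+1%:R ^+ 2 * `|A (x t) - ybar| ^+ 2
  <= 2 * gamma * (t.+1%:R * phi t.+1 - \sum_(k < t.+1) lagr mu (x k)).
Proof.
elim: t => [|t IH].
  by rewrite big_ord1 /=; have := dual_dist_step mu 0; lra.
(* The ascent of phi at step t+1, weighted by t+1, pays for raising the weight
   of the nonincreasing residual from (t+1)^2 to (t+2)^2. *)
have step := dual_dist_step mu t.+1.
have T_ge0 : 0 <= t.+1%:R :> R by [].
have c2_ge0 : 0 <= c * gamma ^+ 2 * t.+1%:R ^+ 2.
  exact: mulr_ge0 (mulr_ge0 c_ge0 (sqr_ge0 _)) (sqr_ge0 _).
have mono := ler_wpM2l c2_ge0 (residual_nonincreasing t).
have gT_ge0 : 0 <= 2 * gamma * t.+1%:R by rewrite mulr_ge0 // mulr_ge0 // ltW.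
have asc := ler_wpM2l gT_ge0 (dual_ascent t.+1).
have : 0 <= t.+1%:R * L * gamma ^+ 3 * `|A (x t.+1) - ybar| ^+ 2.
  exact: mulr_ge0 (mulr_ge0 (mulr_ge0 T_ge0 L_ge0) (exprn_ge0 3 (ltW gamma_gt0)))
    (sqr_ge0 _).
rewrite big_ord_recr /= -[t.+2%:R]natr1.
move: IH step mono asc; lra.
Qed.

Lemma dual_ascent_bound (y : Y) (xd : X) t : lam 0 = 0 -> D xd -> A xd = y ->
  exists2 z, D z &
    c * gamma * t.+1%:R * `|A (x t) - ybar| ^+ 2
      + (8 * gamma * t.+1%:R)^-1 * `|lam t.+1| ^+ 2
    <= r xd - r z - gamma * t.+1%:R / 3 * `|A z - y| ^+ 2
      + gamma * t.+1%:R * `|ybar - y| ^+ 2.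
Proof.
move=> lam0 Dxd Axd.
have T_gt0 : 0 < t.+1%:R :> R by rewrite ltr0n.
have gT_gt0 : 0 < 2 * gamma * t.+1%:R by rewrite !mulr_gt0.
pose mu := - (2 * (gamma * t.+1%:R) / 3) *: (A (avg x t) - y).
have [Dz jensen] :=
  convex_on_avg t
    (strongly_convex_on_convex (ltW c0_gt0) (lagr_strongly_convex mu)) x_in.
exists (avg x t) => //.
have sum := dual_dist_sum mu t; rewrite lam0 subr0 in sum.
have dual := ler_wpM2l (ltW gT_gt0) (lagr_min t.+1 Dxd).
have primal := ler_wpM2l (mulr_ge0 (ler0n _ 2) (ltW gamma_gt0)) jensen.
have gap := completing_square_le (lam t.+1) (ybar - y) (erefl mu).
have lagr_xd : lagr (lam t.+1) xd = r xd + ip (lam t.+1) (ybar - y).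
  by rewrite /lagr Axd -[y - ybar]opprB ipNr opprK.
have lagr_avg : lagr mu (avg x t)
    = r (avg x t) - ip mu ((A (avg x t) - y) - (ybar - y)).
  by rewrite /lagr opprB addrA subrK.
rewrite lagr_xd in dual; rewrite lagr_avg in primal.
rewrite -(ler_pM2l gT_gt0).
have -> : 2 * gamma * t.+1%:R * (c * gamma * t.+1%:R * `|A (x t) - ybar| ^+ 2
      + (8 * gamma * t.+1%:R)^-1 * `|lam t.+1| ^+ 2)
    = 2 * c * gamma ^+ 2 * t.+1%:R ^+ 2 * `|A (x t) - ybar| ^+ 2
      + `|lam t.+1| ^+ 2 / 4.
  by field; rewrite !gt_eqF.
move: sum dual primal gap; lra.
Qed.

End DualAscent.
End InnerProduct.

Lemma norm_le_opnorm (R : realType) (X Y : normedModType R) (A : {linear X -> Y})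
  (u : X) : continuous A -> `|A u| <= opnorm A * `|u|.
Proof.
move=> HAc.
have [M HM] : exists M, forall x, `|x| <= 1 -> `|A x| <= M.
  by move: HAc => /linear_bounded_continuous /bounded_funP /(_ 1).
have hs : has_sup [set `|A x| | x in [set x : X | `|x| <= 1]].
  split; first by exists (`|A 0|); exists 0 => //=; rewrite normr0.
  by exists M => _ [x /= hx <-]; exact: HM.
have [->|u0] := eqVneq u 0; first by rewrite linear0 !normr0 mulr0.
have nu : 0 < `|u| by rewrite normr_gt0.
have : `|A (`|u|^-1 *: u)| <= opnorm A.
  apply: sup_upper_bound => //; exists (`|u|^-1 *: u) => //=.
  by rewrite normrZ ger0_norm ?invr_ge0 // mulVf // normr_eq0.
rewrite linearZ /= normrZ ger0_norm ?invr_ge0 //.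
by rewrite -ler_pdivlMl ?invr_gt0 // invrK mulrC.
Qed.


Theorem lemma3p2
  (R : realType)
  (X : completeNormedModType R)              (* Banach space *)
  (Y : completeNormedModType R)              (* Hilbert space ... *)
  (ip : Y -> Y -> R) (Hip : is_inner_product ip)  (* ... with inner product ip *)
  (A : {linear X -> Y}) (HAc : continuous A)  (* bounded linear operator *)
  (Rf : X -> \bar R)
  (HR0 : forall x, (0 <= Rf x)%E)
  (HRp : proper_fun Rf)
  (HRlsc : lower_semicontinuous Rf)
  (c0 : R) (Hc0 : 0 < c0) (HRsc : strongly_convex c0 Rf)
  (y : Y)
  (Hsol : exists x, (Rf x < +oo)%E /\ A x = y)
  (xd : X) (Hxd : R_minimizing_solution A Rf y xd)
  (* noise model *)
  (d : measure_display) (T : measurableType d) (P : probability T R)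
  (yv : nat -> T -> Y)
  (Hmeas : forall i v, measurable_fun setT (fun w => ip (yv i w) v))
  (Hint : forall v, P.-integrable setT (fun w => (ip (yv 1%N w) v)%:E))
  (Hmean : forall v, (\int[P]_w (ip (yv 1%N w) v)%:E = (ip y v)%:E)%E)
  (Hvar0 : (0 < \int[P]_w (`|yv 1%N w - y| ^+ 2)%:E)%E)
  (Hvar1 : (\int[P]_w (`|yv 1%N w - y| ^+ 2)%:E < +oo)%E)
  (n : nat) (Hn : (0 < n)%N)
  (gamma : R) (Hgamma : 0 < gamma)
  (HgL : gamma * (opnorm A ^+ 2 / (2 * c0)) < 1) :
  forall (w : T) (x : nat -> X) (lam : nat -> Y),
    let ybar := n%:R^-1 *: \sum_(1 <= i < n.+1) yv i w in
    lam 0%N = 0 ->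
    (forall t z, (Rf (x t) - (ip (lam t) (A (x t)))%:E
                  <= Rf z - (ip (lam t) (A z))%:E)%E) ->
    (forall t, lam t.+1 = lam t - gamma *: (A (x t) - ybar)) ->
    forall t : nat,
      let L := opnorm A ^+ 2 / (2 * c0) in
      let c := 2^-1 - L * gamma / 2 in
      ((c * gamma * t.+1%:R * `|A (x t) - ybar| ^+ 2
        + (8 * gamma * t.+1%:R)^-1 * `|lam t.+1| ^+ 2)%:E
       <= eta_t A Rf y xd gamma t + (gamma * t.+1%:R * `|ybar - y| ^+ 2)%:E)%E.
Proof.
move=> w x lam ybar lam0 x_min lamS t /=.
pose D := [set z | (Rf z < +oo)%E]; pose r z := fine (Rf z).
have finE z : D z -> Rf z = (r z)%:E by move=> Dz; rewrite fineK // ge0_fin_numE.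
have [z0 Dz0] := HRp.
have x_in k : D (x k).
  rewrite /D /= ltNge leye_eq; apply/negP => /eqP fx.
  by have := x_min k z0; rewrite fx (finE _ Dz0) /= leye_eq.
have Dxd : D xd by case: Hsol => x1 [Dx1 Ax1]; exact: le_lt_trans (Hxd.2 _ Ax1) Dx1.
have x_min' k z : D z -> r (x k) - ip (lam k) (A (x k)) <= r z - ip (lam k) (A z).
  by move=> Dz; have := x_min k z; rewrite (finE _ Dz) (finE _ (x_in k)).
have normA u : `|A u| ^+ 2 <= opnorm A ^+ 2 * `|u| ^+ 2.
  by rewrite -exprMn !expr2 ler_pM // norm_le_opnorm.
have [z Dz bound] := dual_ascent_bound Hip (sqr_ge0 _) normA Hc0 Hgamma HgL
  (strongly_convex_fine HR0 HRsc) x_in x_min' lamS t lam0 Dxd Hxd.1.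
have eta_ge : ((r xd - r z - gamma * t.+1%:R / 3 * `|A z - y| ^+ 2)%:E
    <= eta_t A Rf y xd gamma t)%E.
  by apply: ereal_sup_ubound; exists z => //; rewrite (finE _ Dz) (finE _ Dxd).
by apply: le_trans (leeD2r _ eta_ge); rewrite -EFinD lee_fin.
Qed.
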